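(* Let $X=(\mathbb{R}^n,S)$ and $A=(\mathbb{R}^m,T)$ be indecomposable topological Alexander quandles, where $S$ and $T$ are continuous additive automorphisms of $\mathbb{R}^n$ and $\mathbb{R}^m$. Then $H^1_{TC}(X,A)$ is (as a group under pointwise addition) equal to $\{\,x\mapsto F(x)+a \;:\; a\in\mathbb{R}^m,\ F:\mathbb{R}^n\to\mathbb{R}^m \text{ linear},\ FS=TF\,\}$.
   Context: A topological Alexander quandle $(A,T)$ is a topological abelian group $A$ with a continuous group automorphism $T$ and operation $a*b=Ta+(1-T)b$. A quandle is indecomposable if the group generated by the right multiplications $x\mapsto x*y$ acts transitively; for $(\mathbb{R}^n,S)$ this is equivalent to $I-S$ being invertible. For a topological quandle $X$ and topological Alexander quandle $(A,T)$, $H^1_{TC}(X,A)$ is the group (pointwise addition) of continuous quandle homomorphisms $\eta:X\to A$, i.e. continuous maps with $\eta(x*y)=T\eta(x)+(1-T)\eta(y)$ for all $x,y$. *)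

From Stdlib Require Import Reals.
From mathcomp Require Import ssreflect ssrfun ssrbool eqtype ssrnat fintype.

Set Implicit Arguments.
Unset Strict Implicit.

Local Open Scope R_scope.

Definition vec (n : nat) := 'I_n -> R.

Definition vadd {n} (x y : vec n) : vec n := fun i => x i + y i.
Definition vsub {n} (x y : vec n) : vec n := fun i => x i - y i.
Definition vscale {n} (c : R) (x : vec n) : vec n := fun i => c * x i.

Definition vcontinuous {n m} (f : vec n -> vec m) : Prop :=
  forall (x : vec n) (eps : R), 0 < eps ->
    exists delta, 0 < delta /\
      forall y : vec n, (forall i, Rabs (y i - x i) < delta) ->
        forall j, Rabs (f y j - f x j) < eps.

Definition additive {n m} (f : vec n -> vec m) : Prop :=
  forall x y, f (vadd x y) = vadd (f x) (f y).

Definition Rlinear {n m} (f : vec n -> vec m) : Prop :=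
  additive f /\ forall (c : R) x, f (vscale c x) = vscale c (f x).

Definition cont_automorphism {n} (S : vec n -> vec n) : Prop :=
  additive S /\ vcontinuous S /\
  exists Sinv : vec n -> vec n, (forall x, Sinv (S x) = x) /\ (forall x, S (Sinv x) = x).

Definition alex {n} (T : vec n -> vec n) (a b : vec n) : vec n :=
  vadd (T a) (vsub b (T b)).

(* orbit of x under the group generated by the right multiplications
   R_y : z |-> z * y  (and their inverses) *)
Inductive inner_reach {n} (S : vec n -> vec n) (x : vec n) : vec n -> Prop :=
  | ir_refl : inner_reach S x x
  | ir_mul : forall z y, inner_reach S x z -> inner_reach S x (alex S z y)
  | ir_inv : forall z y w, inner_reach S x z -> alex S w y = z -> inner_reach S x w.

Definition indecomposable {n} (S : vec n -> vec n) : Prop :=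
  forall x z : vec n, inner_reach S x z.

(* H^1_TC(X, A): continuous quandle homomorphisms X -> A *)
Definition H1TC {n m} (S : vec n -> vec n) (T : vec m -> vec m)
  (eta : vec n -> vec m) : Prop :=
  vcontinuous eta /\
  forall x y, eta (alex S x y) = alex T (eta x) (eta y).

(* Shifting a homomorphism eta by eta(0) gives a homomorphism F with F 0 = 0.
   Taking y = 0 in F (x * y) = T F x + (1 - T) F y gives F S = T F, taking x = 0
   gives F (1 - S) = (1 - T) F.  Indecomposability makes 1 - S surjective and S is
   onto, so any u + v equals S w + (1 - S) y = w * y, and hence F is additive.
   A continuous additive map is homogeneous over Q, hence over R by density.
   Conversely an affine map F + a with F S = T F is a homomorphism, continuous
   since linear maps of R^n are. *)

From HB Require Import structures.
From Stdlib Require Import Reals Lra ZArith FunctionalExtensionality.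
From mathcomp Require Import ssreflect ssrfun ssrbool eqtype ssrnat fintype bigop.

Local Open Scope R_scope.

Definition v0 {n} : vec n := fun _ => 0.

Definition vdelta {n} (i : 'I_n) : vec n := fun k => if k == i then 1 else 0.

Lemma vec_ext {n} (x y : vec n) : (forall i, x i = y i) -> x = y.
Proof. exact: functional_extensionality. Qed.

Ltac vec_lra := apply: vec_ext => ?; rewrite /vadd /vsub /vscale /v0 /=; lra.

HB.instance Definition _ := Monoid.isComLaw.Build R 0 Rplus
  (fun x y z => esym (Rplus_assoc x y z)) Rplus_comm Rplus_0_l.

Lemma vaddA {n} : associative (@vadd n). Proof. by move=> x y z; vec_lra. Qed.
Lemma vaddC {n} : commutative (@vadd n). Proof. by move=> x y; vec_lra. Qed.
Lemma vadd0v {n} : left_id v0 (@vadd n). Proof. by move=> x; vec_lra. Qed.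

HB.instance Definition _ {n} := Monoid.isComLaw.Build (vec n) v0 vadd vaddA vaddC vadd0v.

Lemma vsumE {n} (I : finType) (f : I -> vec n) k :
  (\big[vadd/v0]_(i : I) f i) k = \big[Rplus/0]_(i : I) f i k.
Proof. by rewrite (big_morph (fun v : vec n => v k) (id1 := 0) (op1 := Rplus)). Qed.

Lemma vec_basis_decomposition {n} (y : vec n) :
  y = \big[vadd/v0]_(i < n) vscale (y i) (vdelta i).
Proof.
apply: vec_ext => k; rewrite vsumE (bigD1 k) //= big1 => [|i /negbTE ki].
  by rewrite /vscale /vdelta eqxx; lra.
by rewrite /vscale /vdelta eq_sym ki; lra.
Qed.

Section Additive.

Context {n m : nat} {f : vec n -> vec m} (f_additive : additive f).

Lemma additive0 : f v0 = v0.
Proof.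
have v00 : vadd (@v0 n) v0 = v0 by vec_lra.
apply: vec_ext => i; have := f_equal (fun g => g i) (f_additive v0 v0).
by rewrite v00 /vadd /v0; lra.
Qed.

Lemma additiveB x y : f (vsub x y) = vsub (f x) (f y).
Proof.
have xE : x = vadd (vsub x y) y by vec_lra.
apply: vec_ext => i; have := f_equal (fun g => g i) (f_additive (vsub x y) y).
by rewrite -xE /vadd /vsub; lra.
Qed.

Lemma additive_sum (I : finType) (g : I -> vec n) :
  f (\big[vadd/v0]_(i : I) g i) = \big[vadd/v0]_(i : I) f (g i).
Proof. exact: (big_morph f f_additive additive0). Qed.

Lemma additive_scale_nat (k : nat) x : f (vscale (INR k) x) = vscale (INR k) (f x).
Proof.
elim: k => [|k IHk].
  have -> : vscale (INR 0) x = v0 by vec_lra.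
  by rewrite additive0; vec_lra.
have -> : vscale (INR k.+1) x = vadd (vscale (INR k) x) x
  by apply: vec_ext => i; rewrite /vscale /vadd S_INR; lra.
by rewrite f_additive IHk; apply: vec_ext => i; rewrite /vscale /vadd S_INR; lra.
Qed.

Lemma additive_scale_int (z : Z) x : f (vscale (IZR z) x) = vscale (IZR z) (f x).
Proof.
have posE p : IZR (Zpos p) = INR (Pos.to_nat p)
  by rewrite INR_IZR_INZ positive_nat_Z.
case: z => [|p|p]; first exact: (additive_scale_nat 0).
  by rewrite posE additive_scale_nat.
have -> : vscale (IZR (Zneg p)) x = vsub v0 (vscale (IZR (Zpos p)) x)
  by apply: vec_ext => i; rewrite /vscale /vsub /v0 -Pos2Z.opp_pos opp_IZR; lra.
rewrite additiveB additive0 posE additive_scale_nat.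
by apply: vec_ext => i; rewrite /vscale /vsub /v0 -Pos2Z.opp_pos opp_IZR posE; lra.
Qed.

Lemma additive_scale_rat (p q : Z) x : IZR q <> 0 ->
  f (vscale (IZR p / IZR q) x) = vscale (IZR p / IZR q) (f x).
Proof.
move=> q0; set y := vscale (/ IZR q) x.
have xE : x = vscale (IZR q) y by apply: vec_ext => i; rewrite /y /vscale; field.
have -> : vscale (IZR p / IZR q) x = vscale (IZR p) y
  by apply: vec_ext => i; rewrite /y /vscale; field.
rewrite additive_scale_int; apply: vec_ext => i.
have := f_equal (fun g => g i) (additive_scale_int q y); rewrite -xE /vscale => ->.
by field.
Qed.

End Additive.

Lemma finite_bound {I : finType} (g : I -> R) :
  exists B, 0 <= B /\ forall i, Rabs (g i) <= B.
Proof.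
have sum_ge0 (P : pred I) : 0 <= \big[Rplus/0]_(i | P i) Rabs (g i).
  by apply: big_ind => [|a b|i _]; [lra|lra|exact: Rabs_pos].
exists (\big[Rplus/0]_i Rabs (g i)); split=> [|i]; first exact: sum_ge0.
by rewrite (bigD1 i) //=; have := sum_ge0 (fun k => k != i); lra.
Qed.

Lemma linear_bounded {n m} (F : vec n -> vec m) : Rlinear F ->
  exists K, 0 <= K /\ forall y M j, 0 <= M -> (forall i, Rabs (y i) <= M) ->
    Rabs (F y j) <= M * K.
Proof.
move=> [F_add F_scale].
have [K [K0 HK]] := finite_bound (fun j => \big[Rplus/0]_(i < n) Rabs (F (vdelta i) j)).
exists K; split=> // y M j M0 yM.
rewrite (vec_basis_decomposition y) (additive_sum F_add) vsumE.
apply: (Rle_trans _ (M * \big[Rplus/0]_(i < n) Rabs (F (vdelta i) j))).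
  apply: (big_ind2 (fun a b => Rabs a <= M * b)) => [|a1 b1 a2 b2 h1 h2|i _].
  - by rewrite Rabs_R0; lra.
  - by have := Rabs_triang a1 a2; lra.
  - rewrite F_scale /vscale Rabs_mult.
    by apply: Rmult_le_compat_r; [exact: Rabs_pos|exact: yM].
by apply: Rmult_le_compat_l => //; apply: Rle_trans (HK j); exact: Rle_abs.
Qed.

Lemma linear_continuous {n m} (F : vec n -> vec m) : Rlinear F -> vcontinuous F.
Proof.
move=> F_lin x eps eps0; have [K [K0 HK]] := linear_bounded F F_lin.
have d0 : 0 < eps / (K + 1) by apply: Rdiv_lt_0_compat; lra.
exists (eps / (K + 1)); split=> // y yx j.
have -> : F y j - F x j = F (vsub y x) j by rewrite (additiveB F_lin.1).
apply: Rle_lt_trans (HK _ _ j (Rlt_le _ _ d0) (fun i => Rlt_le _ _ (yx i))) _.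
have : eps / (K + 1) * (K + 1) = eps by field; lra.
by rewrite Rmult_plus_distr_l Rmult_1_r; lra.
Qed.

Lemma rational_approx c d : 0 < d ->
  exists p q : Z, 0 < IZR q /\ Rabs (IZR p / IZR q - c) < d.
Proof.
(* q := ceil (1/d), p := ceil (c q) give 0 < p/q - c <= 1/q < d. *)
move=> d0; have [q_gt _] := archimed (/ d); set q := up (/ d) in q_gt *.
have [p_gt p_le] := archimed (c * IZR q); set p := up (c * IZR q) in p_gt p_le *.
have dVd : / d * d = 1 by field; lra.
have q0 : 0 < IZR q by have := Rinv_0_lt_compat d d0; lra.
exists p, q; split=> //.
set r := IZR p / IZR q - c.
have rq : r * IZR q = IZR p - c * IZR q by rewrite /r; field; lra.
rewrite Rabs_right; nra.
Qed.

Lemma vcontinuous_scale {n m} (f : vec n -> vec m) x j c eps :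
  vcontinuous f -> 0 < eps -> exists d, 0 < d /\ forall c',
    Rabs (c' - c) < d -> Rabs (f (vscale c' x) j - f (vscale c x) j) < eps.
Proof.
move=> f_cont eps0; have [B [B0 HB]] := finite_bound x.
have [d [d0 fd]] := f_cont (vscale c x) eps eps0.
have dB0 : 0 < d / (B + 1) by apply: Rdiv_lt_0_compat; lra.
exists (d / (B + 1)); split=> // c' cc'; apply: fd => i.
have : d / (B + 1) * (B + 1) = d by field; lra.
have := HB i; have := Rabs_pos (x i); have := Rabs_pos (c' - c).
rewrite /vscale -Rmult_minus_distr_r Rabs_mult; nra.
Qed.

Lemma additive_continuous_homogeneous {n m} (f : vec n -> vec m) :
  additive f -> vcontinuous f -> forall c x, f (vscale c x) = vscale c (f x).
Proof.
move=> f_add f_cont c x; apply: vec_ext => j; apply: cond_eq => eps eps0.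
have [d [d0 fd]] := vcontinuous_scale f x j c (eps / 2) f_cont ltac:(lra).
set K := Rabs (f x j) + 1.
have K0 : 0 < K by have := Rabs_pos (f x j); rewrite /K; lra.
have dK0 : 0 < Rmin d (eps / (2 * K)) by apply: Rmin_pos => //; apply: Rdiv_lt_0_compat; lra.
have [p [q [q0 rc]]] := rational_approx c _ dK0.
set r := IZR p / IZR q in rc.
have near_r := fd r (Rlt_le_trans _ _ _ rc (Rmin_l _ _)).
have f_rat : f (vscale r x) = vscale r (f x) by apply: (additive_scale_rat f_add); lra.
rewrite f_rat in near_r; change (vscale r (f x) j) with (r * f x j) in near_r.
change (vscale c (f x) j) with (c * f x j).
have r_small : Rabs ((r - c) * f x j) < eps / 2.
  have rc_e : Rabs (r - c) < eps / (2 * K) by have := Rmin_r d (eps / (2 * K)); lra.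
  have : eps / (2 * K) * K = eps / 2 by field; lra.
  have fK : Rabs (f x j) <= K by rewrite /K; lra.
  rewrite Rabs_mult; have := Rabs_pos (r - c); have := Rabs_pos (f x j).
  move: rc_e fK; set e := eps / (2 * K); clearbody K e; nra.
have := Rabs_triang (f (vscale c x) j - r * f x j) ((r - c) * f x j).
rewrite Rabs_minus_sym in near_r.
have -> : f (vscale c x) j - r * f x j + (r - c) * f x j = f (vscale c x) j - c * f x j by ring.
lra.
Qed.

Lemma alex_vsub {n} {T : vec n -> vec n} : additive T ->
  forall u v c, alex T (vsub u c) (vsub v c) = vsub (alex T u v) c.
Proof. by move=> T_add u v c; rewrite /alex !(additiveB T_add); vec_lra. Qed.

Lemma inner_reach_range {n} {S : vec n -> vec n} {x z : vec n} : additive S ->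
  inner_reach S x z -> exists y, z = vadd x (vsub y (S y)).
Proof.
move=> S_add; elim=> {z} [|z y _ [w ->]|z y w _ [w' zE] wE].
- by exists v0; rewrite (additive0 S_add); vec_lra.
(* Instances are explicit: [S_add] also matches [S (vsub _ _)], as [Rminus] unfolds to [Rplus]. *)
- exists (vadd (vsub (S w) x) y).
  by rewrite /alex (S_add x) (S_add (vsub (S w) x) y) !(additiveB S_add); vec_lra.
- exists (vadd (vsub w' y) w); rewrite S_add (additiveB S_add).
  apply: vec_ext => i; have := f_equal (fun g => g i) wE; rewrite zE.
  by rewrite /alex /vadd /vsub; lra.
Qed.

Lemma indecomposable_range {n} (S : vec n -> vec n) : additive S ->
  indecomposable S -> forall v, exists y, v = vsub y (S y).
Proof.
move=> S_add S_ind v; have [y vE] := inner_reach_range S_add (S_ind v0 v).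
by exists y; rewrite vE; vec_lra.
Qed.

Section QuandleHomomorphism.

Context {n m : nat} {S : vec n -> vec n} {T : vec m -> vec m} {F : vec n -> vec m}.
Context (S_add : additive S) (T_add : additive T).

Lemma affine_quandle_hom a : additive F -> (forall x, F (S x) = T (F x)) ->
  forall x y, vadd (F (alex S x y)) a = alex T (vadd (F x) a) (vadd (F y) a).
Proof.
move=> F_add FS x y.
by rewrite /alex F_add (additiveB F_add) !FS (T_add (F x)) (T_add (F y)); vec_lra.
Qed.

Context (F_hom : forall x y, F (alex S x y) = alex T (F x) (F y)) (F0 : F v0 = v0).

Lemma quandle_hom_commute x : F (S x) = T (F x).
Proof.
have Sx : alex S x v0 = S x by rewrite /alex (additive0 S_add); vec_lra.
by rewrite -Sx F_hom F0 /alex (additive0 T_add); vec_lra.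
Qed.

Lemma quandle_hom_additive : (forall u, exists w, S w = u) ->
  (forall v, exists y, v = vsub y (S y)) -> additive F.
Proof.
move=> S_onto S_range u v; have [w <-] := S_onto u; have [y ->] := S_range v.
have sumE : vadd (S w) (vsub y (S y)) = alex S w y by [].
have diffE : vsub y (S y) = alex S v0 y by rewrite /alex (additive0 S_add); vec_lra.
by rewrite sumE diffE !F_hom F0 quandle_hom_commute /alex (additive0 T_add); vec_lra.
Qed.

End QuandleHomomorphism.

Lemma vcontinuous_offset {n m} (f g : vec n -> vec m) : vcontinuous f ->
  (forall x y j, g y j - g x j = f y j - f x j) -> vcontinuous g.
Proof.
move=> f_cont fg x eps eps0; have [d [d0 fd]] := f_cont x eps eps0.
by exists d; split=> // y yx j; rewrite fg; exact: fd.
Qed.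

Theorem mainTheorem2 (n m : nat) (S : vec n -> vec n) (T : vec m -> vec m) :
  cont_automorphism S -> cont_automorphism T ->
  indecomposable S -> indecomposable T ->
  forall eta : vec n -> vec m,
    H1TC S T eta <->
    exists (F : vec n -> vec m) (a : vec m),
      Rlinear F /\ (forall x, F (S x) = T (F x)) /\
      (forall x, eta x = vadd (F x) a).
Proof.
move=> [S_add [_ [Sinv [_ SSinv]]]] [T_add _] S_ind _ eta; split.
- move=> [eta_cont eta_hom].
  pose F x := vsub (eta x) (eta v0).
  have F_hom x y : F (alex S x y) = alex T (F x) (F y)
    by rewrite /F (alex_vsub T_add) eta_hom.
  have F0 : F v0 = v0 by rewrite /F; vec_lra.
  have F_add : additive F.
    apply: (quandle_hom_additive S_add T_add F_hom F0).
    - by move=> u; exists (Sinv u).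
    - exact: indecomposable_range.
  have F_cont : vcontinuous F.
    by apply: vcontinuous_offset eta_cont _ => x y j; rewrite /F /vsub; ring.
  exists F, (eta v0); split; first by split=> //; exact: additive_continuous_homogeneous.
  split; first exact: (quandle_hom_commute S_add T_add F_hom F0).
  by move=> x; rewrite /F; vec_lra.
- move=> [F [a [[F_add F_scale] [FS etaE]]]]; split.
  + apply: vcontinuous_offset (linear_continuous F (conj F_add F_scale)) _.
    by move=> x y j; rewrite !etaE /vadd; ring.
  + by move=> x y; rewrite !etaE; exact: affine_quandle_hom.
Qed.
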